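(* Let $v$ be a $C^2$ vector field on an open set $\Omega\subset\mathbb{R}^3$ with $1\mp|v|^2>0$ on $\Omega$ (for a fixed choice of sign), satisfying $\nabla\times\frac{v}{\sqrt{1\mp|v|^2}}=0$ on $\Omega$. Then on $\Omega$: (i) $(1\mp|v|^2)\,\nabla\times v\pm\big[\tfrac12\nabla|v|^2\big]\times v=0$; (ii) $v\cdot(\nabla\times v)=0$; (iii) $\nabla|v|^2\cdot(\nabla\times v)=0$; (iv) $\nabla\times v=\pm\,v\times(v\cdot\nabla)v$.
   Context: This is the curl equation of the ''$v$ problem'': for a solution $u$ of $\pm\nabla\cdot\frac{\nabla u}{\sqrt{1\pm|\nabla u|^2}}=3H$ on $\mathbb{R}^3$, $v:=\pm\frac{\nabla u}{\sqrt{1\pm|\nabla u|^2}}$ satisfies $\nabla\cdot v=3H$ and $\nabla\times\frac{v}{\sqrt{1\mp|v|^2}}=0$. The upper sign corresponds to the Euclidean, the lower to the Minkowskian setting. *)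

From Stdlib Require Import Reals.
From Coquelicot Require Import Coquelicot.
Open Scope R_scope.

Definition pt : Type := (R * R * R)%type.

Definition px (p : pt) : R := fst (fst p).
Definition py (p : pt) : R := snd (fst p).
Definition pz (p : pt) : R := snd p.

Definition dx (f : pt -> R) (p : pt) : R := Derive (fun t => f (t, py p, pz p)) (px p).
Definition dy (f : pt -> R) (p : pt) : R := Derive (fun t => f (px p, t, pz p)) (py p).
Definition dz (f : pt -> R) (p : pt) : R := Derive (fun t => f (px p, py p, t)) (pz p).

Definition C1_on (Omega : pt -> Prop) (f : pt -> R) : Prop :=
  forall p, Omega p ->
    continuous f p /\
    ex_derive (fun t => f (t, py p, pz p)) (px p) /\
    ex_derive (fun t => f (px p, t, pz p)) (py p) /\
    ex_derive (fun t => f (px p, py p, t)) (pz p) /\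
    continuous (dx f) p /\ continuous (dy f) p /\ continuous (dz f) p.

Definition C2_on (Omega : pt -> Prop) (f : pt -> R) : Prop :=
  C1_on Omega f /\ C1_on Omega (dx f) /\ C1_on Omega (dy f) /\ C1_on Omega (dz f).

Definition vec (a b c : R) : pt := (a, b, c).
Definition dot (u w : pt) : R := px u * px w + py u * py w + pz u * pz w.
Definition cross (u w : pt) : pt :=
  vec (py u * pz w - pz u * py w) (pz u * px w - px u * pz w) (px u * py w - py u * px w).
Definition vscale (a : R) (u : pt) : pt := vec (a * px u) (a * py u) (a * pz u).
Definition vadd (u w : pt) : pt := vec (px u + px w) (py u + py w) (pz u + pz w).
Definition vzero : pt := vec 0 0 0.

Definition field (v1 v2 v3 : pt -> R) (p : pt) : pt := vec (v1 p) (v2 p) (v3 p).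

Definition grad (f : pt -> R) (p : pt) : pt := vec (dx f p) (dy f p) (dz f p).

Definition curl (v1 v2 v3 : pt -> R) (p : pt) : pt :=
  vec (dy v3 p - dz v2 p) (dz v1 p - dx v3 p) (dx v2 p - dy v1 p).

Definition nsq (v1 v2 v3 : pt -> R) (p : pt) : R := v1 p ^ 2 + v2 p ^ 2 + v3 p ^ 2.

Definition convective (v1 v2 v3 : pt -> R) (p : pt) : pt :=
  vec (v1 p * dx v1 p + v2 p * dy v1 p + v3 p * dz v1 p)
      (v1 p * dx v2 p + v2 p * dy v2 p + v3 p * dz v2 p)
      (v1 p * dx v3 p + v2 p * dy v3 p + v3 p * dz v3 p).

(** Write [W = 1 - s|v|^2].  Differentiating [v / sqrt W] by the quotient rule gives
    [curl (v / sqrt W) = (W curl v + s (grad |v|^2 / 2) x v) / (W sqrt W)], which is (i).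
    Dotting (i) with [v] and with [grad |v|^2] kills the cross product and yields (ii)
    and (iii).  Finally, inserting [grad |v|^2 / 2 = (v . grad) v + v x curl v] into (i)
    and using (ii) in [(v x curl v) x v = |v|^2 curl v - (v . curl v) v] turns (i) into
    [curl v + s ((v . grad) v) x v = 0] (as [W + s|v|^2 = 1]), which is (iv). *)

From Stdlib Require Import Reals Lra.
From Coquelicot Require Import Coquelicot.
Open Scope R_scope.

Ltac vec_simpl :=
  unfold curl, grad, convective, nsq, field, dot, cross, vscale, vadd, vzero, vec,
    px, py, pz in *; cbn [fst snd] in *.

Lemma ex_derive_sum_sq (a b c : R -> R) (t : R) :
  ex_derive a t -> ex_derive b t -> ex_derive c t ->
  ex_derive (fun u => a u ^ 2 + b u ^ 2 + c u ^ 2) t.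
Proof.
  intros Ha Hb Hc.
  auto_derive; repeat split; assumption.
Qed.

Lemma Derive_sum_sq (a b c : R -> R) (t : R) :
  ex_derive a t -> ex_derive b t -> ex_derive c t ->
  Derive (fun u => a u ^ 2 + b u ^ 2 + c u ^ 2) t =
  2 * (a t * Derive a t + b t * Derive b t + c t * Derive c t).
Proof.
  intros Ha Hb Hc.
  apply is_derive_unique.
  auto_derive; [repeat split; assumption |].
  change (fun x => a x) with a; change (fun x => b x) with b;
    change (fun x => c x) with c.
  ring.
Qed.

Lemma Derive_one_sub_scal (s : R) (f : R -> R) (t : R) :
  ex_derive f t -> Derive (fun u => 1 - s * f u) t = - s * Derive f t.
Proof.
  intros Hf.
  apply is_derive_unique.
  auto_derive; [exact Hf |].
  change (fun x => f x) with f.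
  ring.
Qed.

Lemma Derive_div_sqrt (f W : R -> R) (t : R) :
  ex_derive f t -> ex_derive W t -> 0 < W t ->
  Derive (fun u => f u / sqrt (W u)) t =
  Derive f t / sqrt (W t) - f t * Derive W t / (2 * W t * sqrt (W t)).
Proof.
  intros Hf HW Hpos.
  assert (HS : 0 < sqrt (W t)) by (apply sqrt_lt_R0; exact Hpos).
  rewrite (is_derive_unique _ _ _
    (is_derive_div f (fun u => sqrt (W u)) t _ _ (Derive_correct _ _ Hf)
       (is_derive_sqrt W t _ (Derive_correct _ _ HW) Hpos) (Rgt_not_eq _ _ HS))).
  set (S := sqrt (W t)) in *.
  assert (HSS : S * S = W t) by (apply sqrt_sqrt; lra).
  rewrite <- HSS.
  field; lra.
Qed.

Definition has_partials (f : pt -> R) (p : pt) : Prop :=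
  ex_derive (fun t : R => f (t, py p, pz p)) (px p) /\
  ex_derive (fun t : R => f (px p, t, pz p)) (py p) /\
  ex_derive (fun t : R => f (px p, py p, t)) (pz p).

Lemma C2_on_has_partials (Omega : pt -> Prop) (f : pt -> R) (p : pt) :
  C2_on Omega f -> Omega p -> has_partials f p.
Proof.
  intros [Hf _] Hp.
  destruct (Hf p Hp) as (_ & Hx & Hy & Hz & _).
  repeat split; assumption.
Qed.

Lemma has_partials_nsq (v1 v2 v3 : pt -> R) (p : pt) :
  has_partials v1 p -> has_partials v2 p -> has_partials v3 p ->
  has_partials (nsq v1 v2 v3) p.
Proof.
  intros (H1x & H1y & H1z) (H2x & H2y & H2z) (H3x & H3y & H3z).
  repeat split; apply ex_derive_sum_sq; assumption.
Qed.

Lemma has_partials_one_sub_scal (s : R) (f : pt -> R) (p : pt) :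
  has_partials f p -> has_partials (fun q => 1 - s * f q) p.
Proof.
  intros (Hx & Hy & Hz).
  repeat split;
    apply (ex_derive_minus (fun _ => 1)); try apply ex_derive_const;
    apply ex_derive_scal; assumption.
Qed.

Lemma grad_one_sub_scal (s : R) (f : pt -> R) (p : pt) :
  has_partials f p -> grad (fun q => 1 - s * f q) p = vscale (- s) (grad f p).
Proof.
  intros (Hx & Hy & Hz).
  unfold grad, dx, dy, dz; vec_simpl.
  rewrite !Derive_one_sub_scal by assumption.
  reflexivity.
Qed.

Lemma half_grad_nsq (v1 v2 v3 : pt -> R) (p : pt) :
  has_partials v1 p -> has_partials v2 p -> has_partials v3 p ->
  vscale (1 / 2) (grad (nsq v1 v2 v3) p) =
  vadd (convective v1 v2 v3 p) (cross (field v1 v2 v3 p) (curl v1 v2 v3 p)).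
Proof.
  destruct p as [[x y] z].
  intros (H1x & H1y & H1z) (H2x & H2y & H2z) (H3x & H3y & H3z).
  pose proof (Derive_sum_sq _ _ _ _ H1x H2x H3x) as Nx.
  pose proof (Derive_sum_sq _ _ _ _ H1y H2y H3y) as Ny.
  pose proof (Derive_sum_sq _ _ _ _ H1z H2z H3z) as Nz.
  unfold grad, convective, curl, dx, dy, dz, nsq in *; cbv beta in *.
  vec_simpl; rewrite Nx, Ny, Nz.
  f_equal; [f_equal|]; field.
Qed.

Lemma curl_div_sqrt (v1 v2 v3 W : pt -> R) (p : pt) :
  has_partials v1 p -> has_partials v2 p -> has_partials v3 p -> has_partials W p ->
  0 < W p ->
  curl (fun q => v1 q / sqrt (W q)) (fun q => v2 q / sqrt (W q))
       (fun q => v3 q / sqrt (W q)) p =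
  vadd (vscale (/ sqrt (W p)) (curl v1 v2 v3 p))
       (vscale (/ (2 * W p * sqrt (W p))) (cross (field v1 v2 v3 p) (grad W p))).
Proof.
  destruct p as [[x y] z].
  intros (H1x & H1y & H1z) (H2x & H2y & H2z) (H3x & H3y & H3z) (HWx & HWy & HWz) HW.
  assert (HS : 0 < sqrt (W (x, y, z))) by (apply sqrt_lt_R0; exact HW).
  unfold curl, grad, dx, dy, dz; vec_simpl.
  rewrite !Derive_div_sqrt by assumption.
  f_equal; [f_equal|]; field; lra.
Qed.

Lemma curl_div_sqrt_one_sub_nsq (s : R) (v1 v2 v3 : pt -> R) (p : pt) :
  has_partials v1 p -> has_partials v2 p -> has_partials v3 p ->
  0 < 1 - s * nsq v1 v2 v3 p ->
  curl (fun q => v1 q / sqrt (1 - s * nsq v1 v2 v3 q))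
       (fun q => v2 q / sqrt (1 - s * nsq v1 v2 v3 q))
       (fun q => v3 q / sqrt (1 - s * nsq v1 v2 v3 q)) p =
  vscale (/ ((1 - s * nsq v1 v2 v3 p) * sqrt (1 - s * nsq v1 v2 v3 p)))
    (vadd (vscale (1 - s * nsq v1 v2 v3 p) (curl v1 v2 v3 p))
          (vscale s (cross (vscale (1 / 2) (grad (nsq v1 v2 v3) p)) (field v1 v2 v3 p)))).
Proof.
  intros H1 H2 H3 HW.
  pose proof (has_partials_nsq _ _ _ _ H1 H2 H3) as Hn.
  rewrite (curl_div_sqrt v1 v2 v3 (fun q => 1 - s * nsq v1 v2 v3 q) p H1 H2 H3
             (has_partials_one_sub_scal s _ p Hn) HW).
  rewrite (grad_one_sub_scal s _ p Hn).
  assert (HS : 0 < sqrt (1 - s * nsq v1 v2 v3 p)) by (apply sqrt_lt_R0; exact HW).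
  set (S := sqrt (1 - s * nsq v1 v2 v3 p)) in *.
  set (W := 1 - s * nsq v1 v2 v3 p) in *.
  generalize (curl v1 v2 v3 p) (grad (nsq v1 v2 v3) p) (field v1 v2 v3 p).
  intros [[a1 a2] a3] [[g1 g2] g3] [[u1 u2] u3]; vec_simpl.
  f_equal; [f_equal|]; field; lra.
Qed.

Lemma nsq_eq_dot (v1 v2 v3 : pt -> R) (p : pt) :
  nsq v1 v2 v3 p = dot (field v1 v2 v3 p) (field v1 v2 v3 p).
Proof. vec_simpl; ring. Qed.

Lemma dot_vscale_l (a : R) (u w : pt) : dot (vscale a u) w = a * dot u w.
Proof. vec_simpl; ring. Qed.

Lemma vscale_eq_vzero (a : R) (u : pt) : a <> 0 -> vscale a u = vzero -> u = vzero.
Proof.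
  destruct u as [[u1 u2] u3]; vec_simpl.
  intros Ha H; injection H as H1 H2 H3.
  f_equal; [f_equal|]; apply (Rmult_eq_reg_l a); lra.
Qed.

Lemma dot_eq0_of_vadd_cross_eq0 (a s : R) (u g w : pt) :
  a <> 0 -> vadd (vscale a w) (vscale s (cross g u)) = vzero ->
  dot u w = 0 /\ dot g w = 0.
Proof.
  destruct u as [[u1 u2] u3], g as [[g1 g2] g3], w as [[w1 w2] w3]; vec_simpl.
  intros Ha H; injection H as H1 H2 H3.
  assert (Hu : a * (u1 * w1 + u2 * w2 + u3 * w3) = 0).
  { transitivity (u1 * (a * w1 + s * (g2 * u3 - g3 * u2))
                  + u2 * (a * w2 + s * (g3 * u1 - g1 * u3))
                  + u3 * (a * w3 + s * (g1 * u2 - g2 * u1))); [ring|].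
    rewrite H1, H2, H3; ring. }
  assert (Hg : a * (g1 * w1 + g2 * w2 + g3 * w3) = 0).
  { transitivity (g1 * (a * w1 + s * (g2 * u3 - g3 * u2))
                  + g2 * (a * w2 + s * (g3 * u1 - g1 * u3))
                  + g3 * (a * w3 + s * (g1 * u2 - g2 * u1))); [ring|].
    rewrite H1, H2, H3; ring. }
  split; [destruct (Rmult_integral _ _ Hu) | destruct (Rmult_integral _ _ Hg)]; tauto.
Qed.

Lemma eq_scal_cross_of_vadd_cross_eq0 (s : R) (u c w : pt) :
  dot u w = 0 ->
  vadd (vscale (1 - s * dot u u) w) (vscale s (cross (vadd c (cross u w)) u)) = vzero ->
  w = vscale s (cross u c).
Proof.
  destruct u as [[u1 u2] u3], c as [[c1 c2] c3], w as [[w1 w2] w3]; vec_simpl.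
  intros Huw H; injection H as H1 H2 H3.
  assert (Hs1 : s * u1 * (u1 * w1 + u2 * w2 + u3 * w3) = 0) by (rewrite Huw; ring).
  assert (Hs2 : s * u2 * (u1 * w1 + u2 * w2 + u3 * w3) = 0) by (rewrite Huw; ring).
  assert (Hs3 : s * u3 * (u1 * w1 + u2 * w2 + u3 * w3) = 0) by (rewrite Huw; ring).
  f_equal; [f_equal|]; lra.
Qed.

Theorem mainTheorem2 (s : R) (Omega : pt -> Prop) (v1 v2 v3 : pt -> R) :
  (s = 1 \/ s = -1) ->
  open Omega ->
  C2_on Omega v1 -> C2_on Omega v2 -> C2_on Omega v3 ->
  (forall p, Omega p -> 1 - s * nsq v1 v2 v3 p > 0) ->
  (forall p, Omega p ->
     curl (fun q => v1 q / sqrt (1 - s * nsq v1 v2 v3 q))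
          (fun q => v2 q / sqrt (1 - s * nsq v1 v2 v3 q))
          (fun q => v3 q / sqrt (1 - s * nsq v1 v2 v3 q)) p = vzero) ->
  forall p, Omega p ->
    vadd (vscale (1 - s * nsq v1 v2 v3 p) (curl v1 v2 v3 p))
         (vscale s (cross (vscale (1/2) (grad (nsq v1 v2 v3) p)) (field v1 v2 v3 p)))
      = vzero /\
    dot (field v1 v2 v3 p) (curl v1 v2 v3 p) = 0 /\
    dot (grad (nsq v1 v2 v3) p) (curl v1 v2 v3 p) = 0 /\
    curl v1 v2 v3 p = vscale s (cross (field v1 v2 v3 p) (convective v1 v2 v3 p)).
Proof.
  intros _ _ Hv1 Hv2 Hv3 Hpos Hcurl p Hp.
  pose proof (C2_on_has_partials _ _ _ Hv1 Hp) as H1.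
  pose proof (C2_on_has_partials _ _ _ Hv2 Hp) as H2.
  pose proof (C2_on_has_partials _ _ _ Hv3 Hp) as H3.
  pose proof (Hpos p Hp) as HW.
  assert (HS : 0 < sqrt (1 - s * nsq v1 v2 v3 p)) by (apply sqrt_lt_R0; exact HW).
  assert (Hi : vadd (vscale (1 - s * nsq v1 v2 v3 p) (curl v1 v2 v3 p))
                 (vscale s (cross (vscale (1/2) (grad (nsq v1 v2 v3) p))
                                  (field v1 v2 v3 p))) = vzero).
  { apply (vscale_eq_vzero (/ ((1 - s * nsq v1 v2 v3 p) * sqrt (1 - s * nsq v1 v2 v3 p)))).
    - apply Rinv_neq_0_compat, Rmult_integral_contrapositive; split; lra.
    - rewrite <- curl_div_sqrt_one_sub_nsq by assumption.
      exact (Hcurl p Hp). }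
  destruct (dot_eq0_of_vadd_cross_eq0 _ _ _ _ _ (Rgt_not_eq _ _ HW) Hi) as [Hii Hiii].
  repeat split.
  - exact Hi.
  - exact Hii.
  - rewrite dot_vscale_l in Hiii; lra.
  - apply eq_scal_cross_of_vadd_cross_eq0; [exact Hii |].
    rewrite <- half_grad_nsq, <- nsq_eq_dot by assumption.
    exact Hi.
Qed.
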